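(* Let $(E,C)$ be a separated graph with $E^0$ and $E^1$ countable, let $S\subseteq C_{fin}$ and let $K$ be a field. Then there exist an interval (possibly unbounded) $\mathfrak{X}\subseteq\mathbb{R}$ and an $(E,C,S)$-algebraic branching system $(\mathfrak{X},\{R_e\}_{e\in E^1},\{D_v\}_{v\in E^0},\{f_e\}_{e\in E^1})$ satisfying, for every non-sink $v$: (i) $R_e\cap R_f\neq\emptyset$ for $e\in X$, $f\in Y$, $X,Y\in C_v$, $X\neq Y$; (ii) $\bigcup_{e\in X}R_e\subsetneq D_v$ for each $X\in C_v\setminus S$; (iii) $\bigcup_{e\in X}R_e\neq\bigcup_{f\in Y}R_f$ for $X,Y\in C_v\setminus S$, $X\neq Y$; together with a $K$-algebra homomorphism $\pi:L_K(E,C,S)\to \mathrm{Hom}_K(M)$, where $M$ is the $K$-module of all functions $\mathfrak{X}\to K$, such that for all $\phi\in M$, $v\in E^0$, $e\in E^1$: $$\pi(v)(\phi)=\chi_{D_v}\cdot\phi,\qquad \pi(e)(\phi)=\chi_{R_e}\cdot \phi\circ f_e^{-1},\qquad \pi(e^* )(\phi)=\chi_{D_{r(e)}}\cdot\phi\circ f_e.$$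
   Context: A separated graph is a pair $(E,C)$ where $E=(E^0,E^1,r,s)$ is a directed graph and $C=\bigcup_{v\in E^0}C_v$, where for each non-sink $v$, $C_v$ is a partition of $s^{-1}(v)$ into pairwise disjoint nonempty sets; $C_{fin}$ is the set of finite $Y\in C$. For $S\subseteq C_{fin}$ and a field $K$, the Cohn-Leavitt algebra $L_K(E,C,S)$ is the universal $K$-algebra generated by pairwise orthogonal idempotents $\{v:v\in E^0\}$ and elements $\{e,e^*:e\in E^1\}$ subject to: $s(e)e=er(e)=e$; $r(e)e^*=e^*s(e)=e^*$; $e^*f=\delta_{e,f}r(e)$ for $e,f\in Y$, $Y\in C$; $v=\sum_{e\in X}ee^*$ for every $X\in S\cap C_v$, $v$ non-sink. An $(E,C,S)$-algebraic branching system is a set $\mathfrak{X}$ with subsets $\{R_e\}_{e\in E^1}$, $\{D_v\}_{v\in E^0}$ and maps $f_e$ such that: $R_e\cap R_d=\emptyset$ for distinct $d,e$ in a common $Y\in C$; the $D_v$ are pairwise disjoint; $R_e\subseteq D_{s(e)}$; $D_v=\bigcup_{e\in Y}R_e$ whenever $Y\in S\cap C_v$; each $f_e:D_{r(e)}\to R_e$ is a bijection. Notation: $\chi_{R_e}\cdot\phi\circ f_e^{-1}$ denotes the function equal to $\phi(f_e^{-1}(x))$ for $x\in R_e$ and $0$ otherwise; $\chi_{D_{r(e)}}\cdot\phi\circ f_e$ denotes the function equal to $\phi(f_e(x))$ for $x\in D_{r(e)}$ and $0$ otherwise; $\chi_{D_v}$ is the characteristic function of $D_v$. *)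

From HB Require Import structures.
From mathcomp Require Import all_boot all_order all_algebra.
From mathcomp Require Import boolp classical_sets functions cardinality fsbigop.
From Stdlib Require Import Reals.

Set Implicit Arguments.
Unset Strict Implicit.
Unset Printing Implicit Defensive.
Import Order.TTheory GRing.Theory.
Local Open Scope classical_set_scope.
Local Open Scope ring_scope.

Record nuAlg (K : fieldType) := NuAlg {
  nua_sort :> lmodType K;
  nua_mul : nua_sort -> nua_sort -> nua_sort;
  nua_mulA : associative nua_mul;
  nua_mulDl : left_distributive nua_mul +%R;
  nua_mulDr : right_distributive nua_mul +%R;
  nua_mulZl : forall (k : K) (x y : nua_sort), nua_mul (k *: x) y = k *: nua_mul x y;
  nua_mulZr : forall (k : K) (x y : nua_sort), nua_mul x (k *: y) = k *: nua_mul x y }.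

Definition nua_hom (K : fieldType) (A B : nuAlg K) (h : A -> B) : Prop :=
  [/\ {morph h : x y / x + y},
      (forall (k : K) (x : A), h (k *: x) = k *: h x) &
      {morph h : x y / nua_mul x y >-> nua_mul x y}].

Section SepGraph.
Variables (E0 E1 : countType) (s r : E1 -> E0).

Definition is_sink (v : E0) : Prop := forall e, s e <> v.

(* (E,C) separated graph, C given vertexwise by Cv : E0 -> set (set E1). *)
Definition separated (Cv : E0 -> set (set E1)) : Prop :=
  forall v,
    (is_sink v -> Cv v = set0) /\
    (~ is_sink v ->
       [/\ (forall X, Cv v X -> X !=set0),
           (forall X Y, Cv v X -> Cv v Y -> X <> Y -> X `&` Y = set0) &
           \bigcup_(X in Cv v) X = s @^-1` [set v]]).

Definition Cset (Cv : E0 -> set (set E1)) : set (set E1) := \bigcup_(v in setT) Cv v.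

Definition Cfin (Cv : E0 -> set (set E1)) : set (set E1) :=
  [set X | Cset Cv X /\ finite_set X].

Variables (K : fieldType) (Cv : E0 -> set (set E1)) (S : set (set E1)).

Definition CL_relations (B : nuAlg K) (pv : E0 -> B) (pe ps : E1 -> B) : Prop :=
  [/\ (forall v w, nua_mul (pv v) (pv w) = if v == w then pv v else 0),
      (forall e, nua_mul (pv (s e)) (pe e) = pe e /\ nua_mul (pe e) (pv (r e)) = pe e),
      (forall e, nua_mul (pv (r e)) (ps e) = ps e /\ nua_mul (ps e) (pv (s e)) = ps e),
      (forall Y e f, Cset Cv Y -> Y e -> Y f ->
          nua_mul (ps e) (pe f) = if e == f then pv (r e) else 0) &
      (forall v X, ~ is_sink v -> S X -> Cv v X ->
          pv v = \sum_(e \in X) nua_mul (pe e) (ps e))].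

Definition is_CohnLeavitt (A : nuAlg K) (av : E0 -> A) (ae as_ : E1 -> A) : Prop :=
  CL_relations av ae as_ /\
  forall (B : nuAlg K) (pv : E0 -> B) (pe ps : E1 -> B),
    CL_relations pv pe ps ->
    exists h : A -> B,
      [/\ nua_hom h, (forall v, h (av v) = pv v), (forall e, h (ae e) = pe e),
          (forall e, h (as_ e) = ps e) &
          forall h' : A -> B, nua_hom h' -> (forall v, h' (av v) = pv v) ->
            (forall e, h' (ae e) = pe e) -> (forall e, h' (as_ e) = ps e) ->
            h' =1 h].

Definition branching_system (T : Type) (Rs : E1 -> set T) (D : E0 -> set T)
    (f : E1 -> T -> T) : Prop :=
  [/\ (forall Y d e, Cset Cv Y -> Y d -> Y e -> d <> e -> Rs d `&` Rs e = set0),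
      (forall v w, v <> w -> D v `&` D w = set0),
      (forall e, Rs e `<=` D (s e)),
      (forall v Y, ~ is_sink v -> S Y -> Cv v Y -> D v = \bigcup_(e in Y) Rs e) &
      (forall e, set_bij (D (r e)) (Rs e) (f e))].

End SepGraph.

Definition chi (T : Type) (K : fieldType) (A : set T) (x : T) : K :=
  if `[< A x >] then 1 else 0.

Definition is_real_interval (X : set R) : Prop :=
  forall x y z, X x -> X y -> (x <= z <= y)%R -> X z.

From HB Require Import structures.
From mathcomp Require Import all_boot all_algebra.
From mathcomp Require Import boolp classical_sets functions cardinality fsbigop.
From Stdlib Require Import Reals.
Import GRing.Theory.
Local Open Scope classical_set_scope.
Local Open Scope ring_scope.
Set Implicit Arguments.
Unset Strict Implicit.

(* Any branching system yields a representation of L_K(E,C,S) on K^X by weighted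
   composition operators, because under it the Cohn-Leavitt relations become set
   identities between the D_v and the R_e; so it suffices to build a branching system
   satisfying (i)-(iii).  Its points are triples (v, n, l) with v a vertex, n a natural
   number and l a list of edges: D_v collects the points with first coordinate v, and
   (v, n, l) lies in R_e when e is the first entry of l in the class X of e or, if l
   misses X and X is in S, when e is a fixed element of X.  The lists [e; f], [] and
   [f] witness (i), (ii) and (iii).  The index n makes every D_v and R_e countably
   infinite, hence equipotent, which yields the bijections f_e; the countably many
   points are finally embedded injectively in R. *)

Lemma card_eq_set_bij (T U : Type) (u : U) (A : set T) (B : set U) :
  (A #= B)%card -> exists f, set_bij A B f.
Proof. by move=> /card_bijP[f fbij]; exists (valLR u f); apply/valLR_bijP. Qed.

Lemma set_bij_inverse (T : Type) (A B : set T) (f : T -> T) : set_bij A B f ->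
  exists g, [/\ forall y, B y -> A (g y), forall x, A x -> g (f x) = x &
                forall y, B y -> f (g y) = y].
Proof.
case=> fAB finj fsurj.
have /choice[g gP] : forall y, exists x, B y -> A x /\ f x = y.
  move=> y; have [By|nBy] := pselect (B y); last by exists y.
  by have [x Ax <-] := fsurj y By; exists x.
exists g; split=> [y /gP[]//|x Ax|y /gP[]//].
by have [gA gK] := gP _ (fAB x Ax); apply: finj; rewrite ?inE.
Qed.

Lemma infinite_set_inj (T : Type) (A : set T) (g : nat -> T) :
  injective g -> range g `<=` A -> infinite_set A.
Proof.
move=> ginj gA; apply/infiniteP; apply: (card_le_trans _ (subset_card_le gA)).
by rewrite (card_le_eqr (inj_card_eq (in2W ginj))).
Qed.

Section InjectiveImage.
Variables (T U : Type) (i : T -> U).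
Hypothesis iinj : injective i.

Lemma inj_imageI (A B : set T) : i @` (A `&` B) = i @` A `&` i @` B.
Proof.
apply/seteqP; split=> [_ [x [Ax Bx] <-]|_ [[x Ax <-] [y By /iinj yx]]].
  by split; exists x.
by exists x => //; split => //; rewrite -yx.
Qed.

Lemma inj_image_eq (A B : set T) : i @` A = i @` B -> A = B.
Proof.
move=> AB; apply/seteqP; split=> x Ax; rewrite -(image_inj (f := i)) //.
  by rewrite -AB; exists x.
by rewrite AB; exists x.
Qed.

Lemma inj_image_proper (A B : set T) : A `<` B -> i @` A `<` i @` B.
Proof.
case=> AB nBA; split=> [|BA]; first exact: image_subset.
apply: nBA => x Bx; have : (i @` A) (i x) by apply: BA; exists x.
by rewrite image_inj.
Qed.

Lemma inj_image_card_eq (A B : set T) : (A #= B)%card -> (i @` A #= i @` B)%card.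
Proof.
have iA := inj_card_eq (in2W iinj) (A := A).
have iB := inj_card_eq (in2W iinj) (A := B).
by rewrite (card_eql iA) (card_eqr iB).
Qed.

End InjectiveImage.

Section Indicator.
Variables (K : fieldType) (U : Type).
Implicit Types A B : set U.

Lemma chi_in A x : A x -> chi K A x = 1.
Proof. by move=> Ax; rewrite /chi asboolT. Qed.

Lemma chi_out A x : ~ A x -> chi K A x = 0.
Proof. by move=> Ax; rewrite /chi asboolF. Qed.

Lemma chi_neq0 A x : chi K A x != 0 -> A x.
Proof. by rewrite /chi; case: asboolP => // _; rewrite eqxx. Qed.

Lemma chiI A B x : chi K A x * chi K B x = chi K (A `&` B) x.
Proof.
have [Ax|nAx] := pselect (A x); last by rewrite (chi_out nAx) mul0r chi_out // => -[].
have [Bx|nBx] := pselect (B x); last by rewrite (chi_out nBx) mulr0 chi_out // => -[].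
by rewrite !chi_in ?mulr1.
Qed.

Lemma chiM_homo {A B} {h : U -> U} : (forall y, A y -> B (h y)) ->
  forall x, chi K A x * chi K B (h x) = chi K A x.
Proof.
move=> hAB x; have [Ax|nAx] := pselect (A x); last by rewrite chi_out ?mul0r.
by rewrite !chi_in ?mulr1 //; exact: hAB.
Qed.

Lemma chi_bigcup (I : choiceType) (X : set I) (A : I -> set U) x :
    finite_set X -> (forall d e, X d -> X e -> d <> e -> A d `&` A e = set0) ->
  chi K (\bigcup_(e in X) A e) x = \sum_(e \in X) chi K (A e) x.
Proof.
move=> Xfin Adisj; have [[e0 Xe0 Ax]|nAx] := pselect ((\bigcup_(e in X) A e) x).
  rewrite chi_in; last by exists e0.
  rewrite (fsbigD1 e0) //= chi_in // fsbig1 ?addr0 // => e [Xe e0e].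
  apply: chi_out => Aex; have := Adisj _ _ Xe0 Xe (nesym e0e).
  by move/seteqP => [/(_ x (conj Ax Aex))].
rewrite chi_out // fsbig1 // => e Xe; apply: chi_out => Aex; apply: nAx.
by exists e.
Qed.

End Indicator.

Section LinearEndomorphisms.
Variables (K : fieldType) (U : Type).
Local Notation M := (U -> K^o).

Definition linear_endo : {pred M -> M} := fun F =>
  `[< (forall a b, F (a + b) = F a + F b) /\ (forall (k : K) a, F (k *: a) = k *: F a) >].

Lemma linear_endo_submod_closed : subsemimod_closed linear_endo.
Proof.
split; [split|].
- by rewrite unfold_in; apply/asboolP; split=> [a b|k a]; rewrite ?addr0 ?scaler0.
- move=> F G; rewrite !unfold_in => /asboolP[FD FZ] /asboolP[GD GZ].
  apply/asboolP; split=> [a b|k a]; apply/funext => x; rewrite !fctE ?FD ?GD ?FZ ?GZ !fctE.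
    by rewrite addrACA.
  by rewrite scalerDr.
- move=> k F; rewrite !unfold_in => /asboolP[FD FZ].
  apply/asboolP; split=> [a b|c a]; apply/funext => x; rewrite !fctE ?FD ?FZ !fctE.
    by rewrite scalerDr.
  by rewrite !scalerA mulrC.
Qed.

HB.instance Definition _ :=
  GRing.isSubmodClosed.Build K (M -> M) linear_endo linear_endo_submod_closed.

Definition endo := {F : M -> M | linear_endo F}.
HB.instance Definition _ := [isSub for (@sval _ _ : endo -> _)].
HB.instance Definition _ := [Choice of endo by <:].
HB.instance Definition _ := [SubChoice_isSubLmodule of endo by <:].

Lemma endoD (F : endo) a b : val F (a + b) = val F a + val F b.
Proof. by case: F => F /= /asboolP[]. Qed.

Lemma endoZ (F : endo) k a : val F (k *: a) = k *: val F a.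
Proof. by case: F => F /= /asboolP[]. Qed.

Lemma val_endoZ k (F : endo) : val (k *: F) = k *: val F.
Proof. by []. Qed.

Lemma linear_endo_comp (F G : endo) : linear_endo (val F \o val G).
Proof. by apply/asboolP; split=> [a b|k a] /=; rewrite ?endoD ?endoZ. Qed.

Definition endo_comp (F G : endo) : endo := Sub _ (linear_endo_comp F G).

Lemma endo_compA : associative endo_comp.
Proof. by move=> F G H; apply: val_inj. Qed.

Lemma endo_compDl : left_distributive endo_comp +%R.
Proof. by move=> F G H; apply: val_inj. Qed.

Lemma endo_compDr : right_distributive endo_comp +%R.
Proof. by move=> F G H; apply: val_inj; apply/funext => a /=; rewrite endoD. Qed.

Lemma endo_compZl k (F G : endo) : endo_comp (k *: F) G = k *: endo_comp F G.
Proof. exact: val_inj. Qed.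

Lemma endo_compZr k (F G : endo) : endo_comp F (k *: G) = k *: endo_comp F G.
Proof. by apply: val_inj; apply/funext => a /=; rewrite endoZ. Qed.

Definition endo_nuAlg : nuAlg K :=
  NuAlg endo_compA endo_compDl endo_compDr endo_compZl endo_compZr.

Definition wcomp_fun (w : U -> K) (h : U -> U) : M -> M := fun phi x => w x * phi (h x).

Lemma linear_wcomp w h : linear_endo (wcomp_fun w h).
Proof.
apply/asboolP; split=> [a b|k a]; apply/funext => x; rewrite /wcomp_fun !fctE.
  by rewrite mulrDr.
by rewrite /GRing.scale /= mulrCA.
Qed.

Definition wcomp w h : endo := Sub _ (linear_wcomp w h).

Lemma wcomp_comp w h w' h' :
  endo_comp (wcomp w h) (wcomp w' h') = wcomp (fun x => w x * w' (h x)) (h' \o h).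
Proof.
by apply: val_inj; apply/funext => phi; apply/funext => x /=; rewrite /wcomp_fun mulrA.
Qed.

Lemma eq_wcomp w h w' h' : w =1 w' -> (forall x, w' x != 0 -> h x = h' x) ->
  wcomp w h = wcomp w' h'.
Proof.
move=> ww' hh'; apply: val_inj; apply/funext => phi; apply/funext => x /=.
rewrite /wcomp_fun ww'; have [->|/hh'->] := eqVneq (w' x) 0; by rewrite ?mul0r.
Qed.

Lemma wcomp0 h : wcomp (fun=> 0) h = 0.
Proof.
by apply: val_inj; apply/funext => phi; apply/funext => x /=; rewrite /wcomp_fun mul0r.
Qed.

Lemma wcomp_sum (I : choiceType) (X : set I) (w : I -> U -> K) h : finite_set X ->
  \sum_(i \in X) wcomp (w i) h = wcomp (fun x => \sum_(i \in X) w i x) h.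
Proof.
move=> Xfin; rewrite fsbig_finite //; apply: val_inj.
apply/funext => phi; apply/funext => x; rewrite raddf_sum /= /wcomp_fun fsbig_finite //.
by rewrite !fct_sumE mulr_suml.
Qed.

End LinearEndomorphisms.

Section BranchingSets.
Variables (E0 E1 : countType) (s r : E1 -> E0) (Cv : E0 -> set (set E1)).
Variable S : set (set E1).

Definition branching_sets {T : Type} (Rs : E1 -> set T) (D : E0 -> set T) : Prop :=
  [/\ (forall Y d e, Cset Cv Y -> Y d -> Y e -> d <> e -> Rs d `&` Rs e = set0),
      (forall v w, v <> w -> D v `&` D w = set0),
      (forall e, Rs e `<=` D (s e)) &
      (forall v Y, ~ is_sink s v -> S Y -> Cv v Y -> D v = \bigcup_(e in Y) Rs e)].

Definition separating {T : Type} (Rs : E1 -> set T) (D : E0 -> set T) : Prop :=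
  forall v, ~ is_sink s v ->
    [/\ (forall X Y e f, Cv v X -> Cv v Y -> X <> Y -> X e -> Y f -> Rs e `&` Rs f !=set0),
        (forall X, Cv v X -> ~ S X -> \bigcup_(e in X) Rs e `<` D v) &
        (forall X Y, Cv v X -> Cv v Y -> ~ S X -> ~ S Y -> X <> Y ->
           \bigcup_(e in X) Rs e <> \bigcup_(e in Y) Rs e)].

Lemma branching_system_sets (T : Type) (Rs : E1 -> set T) (D : E0 -> set T)
    (f : E1 -> T -> T) : branching_sets Rs D ->
  (forall e, set_bij (D (r e)) (Rs e) (f e)) -> branching_system s r Cv S Rs D f.
Proof. by case. Qed.

Variables (T U : Type) (i : T -> U).
Hypothesis iinj : injective i.

Lemma branching_sets_image (Rs : E1 -> set T) (D : E0 -> set T) : branching_sets Rs D ->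
  branching_sets (fun e => i @` Rs e) (fun v => i @` D v).
Proof.
case=> Rdisj Ddisj RD Dcov; split=> [Y d e CY Yd Ye de|v w vw|e|v Y ns SY CY].
- by rewrite -inj_imageI // (Rdisj Y d e) ?image_set0.
- by rewrite -inj_imageI // Ddisj ?image_set0.
- exact/image_subset/RD.
- by rewrite -image_bigcup (Dcov v Y).
Qed.

Lemma separating_image (Rs : E1 -> set T) (D : E0 -> set T) : separating Rs D ->
  separating (fun e => i @` Rs e) (fun v => i @` D v).
Proof.
move=> sepRD v /sepRD[Rmeet Rproper Rneq]; split.
- move=> X Y e f CX CY XY Xe Yf.
  by rewrite -inj_imageI //; apply/image_nonempty; exact: Rmeet CX CY XY Xe Yf.
- by move=> X CX NSX; rewrite -image_bigcup; exact/inj_image_proper/Rproper.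
- move=> X Y CX CY NSX NSY XY; rewrite -!image_bigcup => /(inj_image_eq iinj).
  exact: Rneq.
Qed.

End BranchingSets.

Section BranchingRepresentation.
Variables (E0 E1 : countType) (s r : E1 -> E0) (Cv : E0 -> set (set E1)).
Variables (S : set (set E1)) (K : fieldType) (U : Type).
Variables (Rs : E1 -> set U) (D : E0 -> set U) (f g : E1 -> U -> U).
Hypothesis HS : S `<=` Cfin Cv.
Hypothesis Hbranch : branching_system s r Cv S Rs D f.
Hypothesis gD : forall e y, Rs e y -> D (r e) (g e y).
Hypothesis gK : forall e x, D (r e) x -> g e (f e x) = x.
Hypothesis fK : forall e y, Rs e y -> f e (g e y) = y.

Definition rep_vertex v : endo_nuAlg K U := wcomp (chi K (D v)) idfun.
Definition rep_edge e : endo_nuAlg K U := wcomp (chi K (Rs e)) (g e).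
Definition rep_ghost e : endo_nuAlg K U := wcomp (chi K (D (r e))) (f e).

Lemma branching_CL_relations : CL_relations s r Cv S rep_vertex rep_edge rep_ghost.
Proof.
have [Rdisj Ddisj RD Dcov fbij] := Hbranch.
have fR e : {homo f e : x / D (r e) x >-> Rs e x} by case: (fbij e).
split=> [v w|e|e|Y d e CY Yd Ye|v X ns SX CX]; rewrite /= ?wcomp_comp.
- case: eqVneq => [<-|/eqP vw]; last rewrite -(wcomp0 K idfun).
    by apply: eq_wcomp => // x; rewrite chiI setIid.
  by apply: eq_wcomp => // x; rewrite chiI Ddisj // chi_out.
- split; apply: eq_wcomp => // x.
    by rewrite chiI setIidr.
  by rewrite chiM_homo //; exact: gD.
- split; apply: eq_wcomp => // x.
    by rewrite chiI setIid.
  by rewrite chiM_homo // => y /fR /RD.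
- case: eqVneq => [<-|/eqP de]; last rewrite -(wcomp0 K (g e \o f d)).
    apply: eq_wcomp => x; first exact: chiM_homo (fR d) x.
    by move=> nD /=; rewrite gK //; exact: chi_neq0 nD.
  apply: eq_wcomp => // x.
  have [Dx|nDx] := pselect (D (r d) x); last by rewrite chi_out ?mul0r.
  rewrite [chi K (Rs e) _]chi_out ?mulr0 // => Re.
  by move/seteqP: (Rdisj _ _ _ CY Yd Ye de) => [/(_ (f d x) (conj (fR _ _ Dx) Re))].
- have [_ Xfin] := HS SX.
  have -> : \sum_(e \in X) nua_mul (rep_edge e) (rep_ghost e) =
            \sum_(e \in X) wcomp (chi K (Rs e)) idfun.
    apply: eq_fsbigr => e _; rewrite /= wcomp_comp.
    apply: eq_wcomp => x; first by rewrite chiM_homo //; exact: gD.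
    by move=> nR /=; rewrite fK //; exact: chi_neq0 nR.
  rewrite wcomp_sum //; apply: eq_wcomp => // x.
  rewrite (Dcov v X) // chi_bigcup // => d e Xd Xe.
  by apply: (Rdisj _ _ _ _ Xd Xe); exists v.
Qed.

End BranchingRepresentation.

Lemma branching_representation (E0 E1 : countType) (s r : E1 -> E0)
    (Cv : E0 -> set (set E1)) (S : set (set E1)) (K : fieldType) (U : Type)
    (Rs : E1 -> set U) (D : E0 -> set U) (f : E1 -> U -> U)
    (HS : S `<=` Cfin Cv) (Hbranch : branching_system s r Cv S Rs D f)
    (L : nuAlg K) (lv : E0 -> L) (le ls : E1 -> L)
    (HL : is_CohnLeavitt s r Cv S lv le ls) :
  exists pi : L -> (U -> K) -> (U -> K),
    [/\ (forall a phi psi, pi a (fun x => phi x + psi x) = (fun x => pi a phi x + pi a psi x)),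
        (forall a (k : K) phi, pi a (fun x => k * phi x) = (fun x => k * pi a phi x)),
        (forall a b phi, pi (a + b) phi = (fun x => pi a phi x + pi b phi x)),
        (forall (k : K) a phi, pi (k *: a) phi = (fun x => k * pi a phi x)) &
        (forall a b phi, pi (nua_mul a b) phi = pi a (pi b phi))] /\
    [/\ (forall v phi, pi (lv v) phi = (fun x => chi K (D v) x * phi x)),
        (forall e phi, (forall y, D (r e) y -> pi (le e) phi (f e y) = phi y) /\
                       (forall x, ~ Rs e x -> pi (le e) phi x = 0)) &
        (forall e phi, pi (ls e) phi = (fun x => chi K (D (r e)) x * phi (f e x)))].
Proof.
have [_ _ _ _ fbij] := Hbranch.
have /choice[g gP] e : exists g, [/\ forall y, Rs e y -> D (r e) (g y),
    forall x, D (r e) x -> g (f e x) = x & forall y, Rs e y -> f e (g y) = y].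
  exact: set_bij_inverse.
have fD e x : D (r e) x -> Rs e (f e x) by case: (fbij e) => + _ _; apply.
have gD e y : Rs e y -> D (r e) (g e y) by case: (gP e) => + _ _; apply.
have gK e x : D (r e) x -> g e (f e x) = x by case: (gP e) => _ + _; apply.
have fK e y : Rs e y -> f e (g e y) = y by case: (gP e) => _ _; apply.
have HCL := branching_CL_relations K HS Hbranch gD gK fK.
have [h [[hD hZ hM] hv he hs _]] := HL.2 _ _ _ _ HCL.
exists (fun a => val (h a)); split; split.
- move=> a phi psi; have := endoD (h a) phi psi; rewrite addrfctE => ->.
  by rewrite addrfctE.
- by move=> a k phi; have := endoZ (h a) k phi; rewrite !scalrfctE.
- by move=> a b phi; rewrite hD raddfD !addrfctE.
- by move=> k a phi; rewrite hZ val_endoZ !scalrfctE.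
- by move=> a b phi; rewrite hM.
- by move=> v phi; rewrite hv.
- move=> e phi; rewrite he; split=> [y Dy|x Rx] /=; rewrite /wcomp_fun.
    by rewrite chi_in ?mul1r ?gK //; exact: fD.
  by rewrite chi_out ?mul0r.
- by move=> e phi; rewrite hs.
Qed.

Section Model.
Variables (E0 E1 : countType) (s r : E1 -> E0) (Cv : E0 -> set (set E1)).
Variable S : set (set E1).
Hypothesis HC : separated s Cv.

Lemma class_nonsink v X : Cv v X -> ~ is_sink s v.
Proof. by move=> CX sk; have [/(_ sk) C0 _] := HC v; rewrite C0 in CX. Qed.

Lemma class_nonempty v X : Cv v X -> X !=set0.
Proof. by move=> CX; have [_ /(_ (class_nonsink CX))[+ _ _]] := HC v; apply. Qed.

Lemma class_source v X e : Cv v X -> X e -> s e = v.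
Proof.
move=> CX Xe; have [_ /(_ (class_nonsink CX))[_ _ Ccup]] := HC v.
have : (\bigcup_(Y in Cv v) Y) e by exists X.
by rewrite Ccup.
Qed.

Lemma class_unique v X Y e : Cv v X -> Cv v Y -> X e -> Y e -> X = Y.
Proof.
move=> CX CY Xe Ye; have [_ /(_ (class_nonsink CX))[_ Cdisj _]] := HC v.
apply: contrapT => XY; have := Cdisj _ _ CX CY XY.
by move/seteqP => [/(_ e (conj Xe Ye))].
Qed.

Lemma edge_class e : exists2 X, Cv (s e) X & X e.
Proof.
have [_ /(_ (fun sk => sk e erefl))[_ _ Ccup]] := HC (s e).
have : (s @^-1` [set s e]) e by [].
by rewrite -Ccup => -[X CX Xe]; exists X.
Qed.

Definition label (X : set E1) (l : seq E1) : option E1 :=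
  if [seq e <- l | `[< X e >]] is e :: _ then Some e
  else if `[< S X >] then xget None (Some @` X) else None.

Lemma labelP X l e : label X l = Some e -> X e.
Proof.
rewrite /label; case Ef: filter => [|e' l'] /=.
  by case: ifP => // _; case: xgetP => [_ -> [x Xx <-] [<-]|].
move=> [<-]; have : e' \in [seq e <- l | `[< X e >]] by rewrite Ef mem_head.
by rewrite mem_filter => /andP[/asboolP].
Qed.

Lemma label_cons_in X e l : X e -> label X (e :: l) = Some e.
Proof. by move=> Xe; rewrite /label /= asboolT. Qed.

Lemma label_cons_out X e l : ~ X e -> label X (e :: l) = label X l.
Proof. by move=> Xe; rewrite /label /= asboolF. Qed.

Lemma label_nil X : ~ S X -> label X [::] = None.
Proof. by move=> NSX; rewrite /label /= asboolF. Qed.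

Lemma label_total X l : S X -> X !=set0 -> exists e, label X l = Some e.
Proof.
move=> SX [x Xx]; rewrite /label; case: filter => [|e _]; last by exists e.
rewrite asboolT //; case: xgetP => [_ -> [e _ <-]|/(_ (Some x))[]]; first by exists e.
by exists x.
Qed.

Local Notation point := (E0 * nat * seq E1)%type.

Definition Dp (v : E0) : set point := [set p | p.1.1 = v].

Definition Rp (e : E1) : set point :=
  [set p | p.1.1 = s e /\ exists2 X, Cv (s e) X & label X p.2 = Some e].

Lemma mem_Rp v X e p : Cv v X -> X e ->
  Rp e p <-> p.1.1 = v /\ label X p.2 = Some e.
Proof.
move=> CX Xe; have se := class_source CX Xe; rewrite /Rp /= se; split.
- by case=> -> [Y CY lY]; rewrite (class_unique CX CY Xe (labelP lY)).
- by case=> -> lX; split=> //; exists X.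
Qed.

Lemma model_branching_sets : branching_sets s Cv S Rp Dp.
Proof.
split=> [Y d e [v _ CY] Yd Ye de|v w vw|e p []//|v Y ns SY CY].
- apply/seteqP; split=> // p [/(mem_Rp _ CY Yd)[_ ld] /(mem_Rp _ CY Ye)[_]].
  by rewrite ld => -[].
- by apply/seteqP; split=> // p [/= pv pw]; apply: vw; rewrite -pv -pw.
- apply/seteqP; split=> [p pv|p [e Ye /(mem_Rp _ CY Ye)[]//]].
  have [e le] := label_total p.2 SY (class_nonempty CY).
  by exists e; [exact: labelP le|apply/(mem_Rp _ CY (labelP le))].
Qed.

Lemma model_separating : separating s Cv S Rp Dp.
Proof.
move=> v ns; split.
- move=> X Y e f CX CY XY Xe Yf; exists (v, 0%N, [:: e; f]); split.
    by apply/(mem_Rp _ CX Xe); rewrite label_cons_in.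
  apply/(mem_Rp _ CY Yf); rewrite label_cons_out ?label_cons_in // => Ye.
  by apply: XY; exact: class_unique CX CY Xe Ye.
- move=> X CX NSX; split=> [p [e Xe /(mem_Rp _ CX Xe)[]//]|].
  move=> /(_ (v, 0%N, [::]) erefl)[e Xe /(mem_Rp _ CX Xe)[_]].
  by rewrite label_nil.
- move=> X Y CX CY NSX NSY XY; have [f Yf] := class_nonempty CY.
  have nXf : ~ X f by move=> Xf; apply: XY; exact: class_unique CX CY Xf Yf.
  move=> /seteqP[_ /(_ (v, 0%N, [:: f]))[|e Xe /(mem_Rp _ CX Xe)[_]]].
    by exists f => //; apply/(mem_Rp _ CY Yf); rewrite label_cons_in.
  by rewrite label_cons_out // label_nil.
Qed.

Lemma model_card e : (Dp (r e) #= Rp e)%card.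
Proof.
have [X CX Xe] := edge_class e.
have Dinf : infinite_set (Dp (r e)).
  by apply: (@infinite_set_inj _ _ (fun n => (r e, n, [::]))) => [n m []|_ [n _ <-]].
have Rinf : infinite_set (Rp e).
  apply: (@infinite_set_inj _ _ (fun n => (s e, n, [:: e]))) => [n m []//|_ [n _ <-]].
  by apply/(mem_Rp _ CX Xe); rewrite label_cons_in.
rewrite (card_eql (eq_card_nat (countableP _) Dinf)) card_eq_sym.
exact: eq_card_nat (countableP _) Rinf.
Qed.

End Model.

Lemma real_branching_system (E0 E1 : countType) (s r : E1 -> E0)
    (Cv : E0 -> set (set E1)) (S : set (set E1)) (HC : separated s Cv) :
  exists (Rs : E1 -> set {x : R | [set: R] x}) (D : E0 -> set {x : R | [set: R] x})
         (f : E1 -> {x : R | [set: R] x} -> {x : R | [set: R] x}),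
    branching_system s r Cv S Rs D f /\ separating s Cv S Rs D.
Proof.
pose i (p : E0 * nat * seq E1) : {x : R | [set: R] x} := exist _ (INR (pickle p)) I.
have iinj : injective i.
  by move=> p q [] /INR_eq; exact: (pcan_inj choice.pickleK).
have /choice[f fbij] e : exists f, set_bij (i @` Dp (r e)) (i @` Rp s Cv S e) f.
  exact/(card_eq_set_bij (i (r e, 0%N, [::])))/(inj_image_card_eq iinj)/model_card.
exists (fun e => i @` Rp s Cv S e), (fun v => i @` Dp v), f; split.
  exact/(branching_system_sets _ fbij)/(branching_sets_image iinj)/model_branching_sets.
exact/(separating_image iinj)/model_separating.
Qed.

Theorem corollary3p4 (E0 E1 : countType) (s r : E1 -> E0)
    (Cv : E0 -> set (set E1)) (S : set (set E1)) (K : fieldType)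
    (HC : separated s Cv) (HS : S `<=` Cfin Cv)
    (L : nuAlg K) (lv : E0 -> L) (le ls : E1 -> L)
    (HL : is_CohnLeavitt s r Cv S lv le ls) :
  exists (X : set R) (Rs : E1 -> set {x : R | X x}) (D : E0 -> set {x : R | X x})
         (f : E1 -> {x : R | X x} -> {x : R | X x})
         (pi : L -> ({x : R | X x} -> K) -> ({x : R | X x} -> K)),
    [/\ is_real_interval X,
        branching_system s r Cv S Rs D f,
        (forall v, ~ is_sink s v ->
          [/\ (forall (X1 Y1 : set E1) (e f' : E1), Cv v X1 -> Cv v Y1 -> X1 <> Y1 ->
                 X1 e -> Y1 f' -> Rs e `&` Rs f' !=set0),
              (forall X1, Cv v X1 -> ~ S X1 -> \bigcup_(e in X1) Rs e `<` D v) &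
              (forall X1 Y1, Cv v X1 -> Cv v Y1 -> ~ S X1 -> ~ S Y1 -> X1 <> Y1 ->
                 \bigcup_(e in X1) Rs e <> \bigcup_(e in Y1) Rs e)]),
        [/\ (forall a phi psi, pi a (fun x => phi x + psi x) = (fun x => pi a phi x + pi a psi x)),
            (forall a (k : K) phi, pi a (fun x => k * phi x) = (fun x => k * pi a phi x)),
            (forall a b phi, pi (a + b) phi = (fun x => pi a phi x + pi b phi x)),
            (forall (k : K) a phi, pi (k *: a) phi = (fun x => k * pi a phi x)) &
            (forall a b phi, pi (nua_mul a b) phi = pi a (pi b phi))] &
        [/\ (forall v phi, pi (lv v) phi = (fun x => chi K (D v) x * phi x)),
            (forall e phi, (forall y, D (r e) y -> pi (le e) phi (f e y) = phi y) /\
                           (forall x, ~ Rs e x -> pi (le e) phi x = 0)) &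
            (forall e phi, pi (ls e) phi = (fun x => chi K (D (r e)) x * phi (f e x)))]].
Proof.
have [Rs [D [f [Hbranch Hsep]]]] := real_branching_system r S HC.
have [pi [Hhom Hgen]] := branching_representation HS Hbranch HL.
by exists setT, Rs, D, f, pi; split.
Qed.
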